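(* Let $A\in\mathbb{R}^{n\times n}$ and $b\in\mathbb{R}^n$, and consider the generalized Newton method $x^{k+1}=(A-D(x^k))^{-1}b$ for the equation $Ax-|x|=b$. (a) If $A-I$ is a nonsingular $M$-matrix, then for every $x^0\in\mathbb{R}^n$ the iteration is well defined for all $k$, the equation has a unique solution $x^*$, and $x^k=x^*$ for all $k\ge n+2$. (b) If $A-I$ is an irreducible singular $M$-matrix, $v>0$ is a vector with $(A^T-I)v=0$, and $v^Tb<0$, then for every $x^0$ with $D(x^0)\neq I$ (i.e. $x^0$ has at least one nonpositive component) the iteration is well defined for all $k$, the equation has a unique solution $x^*$, and $x^k=x^*$ for all $k\ge n+1$.
   Context: For $x\in\mathbb{R}^n$, $|x|$ is the componentwise absolute value, $\mathrm{sign}(x)$ is the vector whose components are $1,0,-1$ according as the corresponding component of $x$ is positive, zero, negative, and $D(x)=\mathrm{diag}(\mathrm{sign}(x))$. A $Z$-matrix is a real square matrix whose off-diagonal entries are all nonpositive; any $Z$-matrix can be written $sI-B$ with $B\ge 0$ entrywise, and it is a nonsingular $M$-matrix if $s>\rho(B)$ and a singular $M$-matrix if $s=\rho(B)$, where $\rho$ is spectral radius. A square matrix $M$ is reducible if there is a permutation matrix $P$ with $P^TMP=\begin{bmatrix}M_{11}&M_{12}\\0&M_{22}\end{bmatrix}$ where $M_{11},M_{22}$ are square (nonempty) blocks; it is irreducible otherwise. If $A-I$ is an irreducible singular $M$-matrix, a vector $v>0$ with $(A^T-I)v=0$ exists and is unique up to a positive scalar multiple. *)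

From HB Require Import structures.
From mathcomp Require Import all_boot all_order all_fingroup all_algebra.
From mathcomp Require Import reals complex.
Set Implicit Arguments. Unset Strict Implicit. Unset Printing Implicit Defensive.
Import Order.TTheory GRing.Theory Num.Theory.
Local Open Scope ring_scope.

Section Defs.
Variables (R : realType) (n : nat).

Definition absv (x : 'cV[R]_n) : 'cV[R]_n := map_mx (fun a => `|a|) x.

Definition Dsign (x : 'cV[R]_n) : 'M[R]_n := diag_mx (\row_i Num.sg (x i 0)).

Definition nonneg_mx (B : 'M[R]_n) : Prop := forall i j, 0 <= B i j.

Definition ceigenvalue (B : 'M[R]_n) (lam : R[i]) : Prop :=
  root (char_poly (map_mx (fun a => real_complex R a) B)) lam.

Definition gt_spectral_radius (s : R) (B : 'M[R]_n) : Prop :=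
  forall lam, ceigenvalue B lam -> Normc.normc lam < s.

Definition eq_spectral_radius (s : R) (B : 'M[R]_n) : Prop :=
  (forall lam, ceigenvalue B lam -> Normc.normc lam <= s) /\
  (exists lam, ceigenvalue B lam /\ Normc.normc lam = s).

Definition Zmatrix (M : 'M[R]_n) : Prop := forall i j, i != j -> M i j <= 0.

Definition nonsingular_Mmatrix (M : 'M[R]_n) : Prop :=
  Zmatrix M /\ exists (s : R) (B : 'M[R]_n),
    nonneg_mx B /\ M = s%:M - B /\ gt_spectral_radius s B.

Definition singular_Mmatrix (M : 'M[R]_n) : Prop :=
  Zmatrix M /\ exists (s : R) (B : 'M[R]_n),
    nonneg_mx B /\ M = s%:M - B /\ eq_spectral_radius s B.

(* reducible: P^T M P = [[M11, M12], [0, M22]] with M11 of size k, 0 < k < n *)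
Definition reducible (M : 'M[R]_n) : Prop :=
  exists (s : 'S_n) (k : nat), (0 < k < n)%N /\
    forall i j : 'I_n, (k <= i)%N -> (j < k)%N ->
      ((perm_mx s)^T *m M *m perm_mx s) i j = 0.

Definition irreducible (M : 'M[R]_n) : Prop := ~ reducible M.

Fixpoint gnewton (A : 'M[R]_n) (b : 'cV[R]_n) (x0 : 'cV[R]_n) (k : nat)
  : 'cV[R]_n :=
  match k with
  | 0 => x0
  | k'.+1 => invmx (A - Dsign (gnewton A b x0 k')) *m b
  end.

Definition gnewton_well_defined (A : 'M[R]_n) (b x0 : 'cV[R]_n) : Prop :=
  forall k, (A - Dsign (gnewton A b x0 k)) \in unitmx.

Definition is_AVE_solution (A : 'M[R]_n) (b x : 'cV[R]_n) : Prop :=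
  A *m x - absv x = b.

End Defs.

(* All Newton matrices [A - D(x)] are of the form [A - diag d] with
   [d_i <= 1].  Such a Z-matrix is monotone (invertible with a nonnegative
   inverse) as soon as [A - I] has a positive vector [u] with [(A - I) u > 0],
   which is the case for a nonsingular M-matrix, or, when [A - I] is
   irreducible with a positive left null vector [v], as soon as some
   [d_i < 1].  Subtracting consecutive Newton equations gives
   [(A - D(x^(k+1))) (x^(k+2) - x^(k+1)) = |x^(k+1)| - D(x^k) x^(k+1) >= 0],
   so the iterates increase from [x^1] on and their set of positive entries
   grows strictly until a fixed point, i.e. a solution, is reached: after at
   most [n] growth steps, and [n - 1] in case (b), where [v^T b < 0] rules
   out nonnegative solutions so every iterate keeps a nonpositive entry.
   Two solutions [y], [z] satisfy [(A - diag d) (y - z) = 0] with [d] the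
   difference quotients of [|.|], whence uniqueness. *)

From HB Require Import structures.
From mathcomp Require Import all_boot all_order all_fingroup all_algebra.
From mathcomp Require Import reals complex.
From mathcomp Require Import boolp.
From mathcomp Require classical_sets.
From mathcomp.algebra_tactics Require Import ring lra.
From mathcomp Require Import zify.
Import Order.TTheory GRing.Theory Num.Theory.
Local Open Scope ring_scope.
Set Implicit Arguments. Unset Strict Implicit.

Section MonotoneMatrices.
Variables (R : realType) (n : nat).
Implicit Types (W N : 'M[R]_n) (u x y : 'cV[R]_n).

Definition monotone_mx N := N \in unitmx /\ forall i j, 0 <= invmx N i j.

Definition semipositive W :=
  exists u, (forall i, 0 < u i 0) /\ forall i, 0 < (W *m u) i 0.

Lemma monotone_mx_ge0 N y :
  monotone_mx N -> (forall i, 0 <= (N *m y) i 0) -> forall i, 0 <= y i 0.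
Proof.
move=> [NU Nge0] Nyge0 i; rewrite -(mulKmx NU y) mxE.
by apply: sumr_ge0 => j _; apply: mulr_ge0.
Qed.

Lemma monotone_mx_of_reflect_ge0 W :
  (forall x, (forall i, 0 <= (W *m x) i 0) -> forall i, 0 <= x i 0) ->
  monotone_mx W.
Proof.
move=> Wmono.
have Winj x : W *m x = 0 -> x = 0.
  move=> Wx0; apply/matrixP => i j; rewrite (ord1 j) !mxE; apply/eqP.
  rewrite eq_le; apply/andP; split; last by apply: Wmono => k; rewrite Wx0 mxE.
  have := Wmono (- x); rewrite mulmxN Wx0 oppr0 => /(_ _ i).
  by rewrite mxE oppr_ge0; apply=> k; rewrite mxE.
have WU : W \in unitmx.
  rewrite unitmxE unitfE -det_tr; apply/negP => /det0P [v vn0 vW].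
  have /Winj /eqP : W *m v^T = 0 by rewrite -[W]trmxK -trmx_mul vW trmx0.
  by rewrite -trmx0 (inj_eq (@trmx_inj _ _ _)) (negPf vn0).
split=> // i j; have := Wmono (col j (invmx W)) _ i; rewrite mxE; apply=> k.
by rewrite colE mulmxA mulmxV // mul1mx mxE ler0n.
Qed.

(* Minimum-ratio argument: if [x] had a negative entry, the rows where
   [x / u] attains its (negative) minimum would form a block [J] that [W]
   does not couple to its complement and on which [W u] vanishes. *)
Lemma Zmatrix_sol_ge0 W u :
  Zmatrix W -> (forall i, 0 < u i 0) -> (forall i, 0 <= (W *m u) i 0) ->
  (forall J : {set 'I_n}, J != set0 ->
     ~ forall i, i \in J -> (W *m u) i 0 = 0 /\ forall j, j \notin J -> W i j = 0) ->
  forall x, (forall i, 0 <= (W *m x) i 0) -> forall i, 0 <= x i 0.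
Proof.
move=> ZW u_gt0 Wu_ge0 no_block x Wx_ge0 i; rewrite leNgt; apply/negP => xi_lt0.
have [m _ m_min] := @Order.TotalTheory.arg_minP _ R _ i xpredT
  (fun j => x j 0 / u j 0) erefl.
set c := x m 0 / u m 0 in m_min.
have c_lt0 : c < 0.
  by apply: le_lt_trans (m_min i erefl) _; rewrite pmulr_llt0 ?invr_gt0.
have cu_le j : c * u j 0 <= x j 0 by rewrite -ler_pdivlMr //; apply: m_min.
apply: (no_block [set j | x j 0 == c * u j 0]).
  by apply/set0Pn; exists m; rewrite inE /c divfK // lt0r_neq0.
move=> j; rewrite inE => /eqP xj.
pose T k := W j k * (x k 0 - c * u k 0).
have T_le0 k : T k <= 0.
  rewrite /T; have [->|kj] := eqVneq k j; first by rewrite xj subrr mulr0.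
  by apply: mulr_le0_ge0; [apply: ZW; rewrite eq_sym | rewrite subr_ge0].
have sumT : \sum_k T k = (W *m x) j 0 - c * (W *m u) j 0.
  by rewrite !mxE mulr_sumr -sumrB; apply: eq_bigr => k _; rewrite /T; ring.
have cWu_le0 : c * (W *m u) j 0 <= 0 by rewrite mulr_le0_ge0 // ltW.
have sumT0 : \sum_k T k = 0.
  have sumT_le0 : \sum_k T k <= 0 by apply: sumr_le0 => k _.
  by apply/eqP; rewrite eq_le sumT_le0 sumT subr_ge0 (le_trans cWu_le0).
split.
  have /eqP : c * (W *m u) j 0 = 0.
    by move: sumT0 (Wx_ge0 j); rewrite sumT; lra.
  by rewrite mulf_eq0 (lt_eqF c_lt0) => /eqP.
move=> k; rewrite inE => /negPf kJ; have /eqP : - T k = 0.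
  apply: (@psumr_eq0P _ _ xpredT (fun k => - T k)) => //.
    by move=> l _; rewrite oppr_ge0.
  by rewrite sumrN sumT0 oppr0.
by rewrite oppr_eq0 /T mulf_eq0 subr_eq0 kJ orbF => /eqP.
Qed.

Lemma semipositive_Zmatrix_monotone W :
  Zmatrix W -> semipositive W -> monotone_mx W.
Proof.
move=> ZW [u [u_gt0 Wu_gt0]]; apply/monotone_mx_of_reflect_ge0.
apply: Zmatrix_sol_ge0 ZW u_gt0 _ _ => [i|J /set0Pn [i iJ] /(_ i iJ) [Wu0 _]].
  exact: ltW.
by have := Wu_gt0 i; rewrite Wu0 ltxx.
Qed.

Lemma monotone_mx_semipositive N : monotone_mx N -> semipositive N.
Proof.
move=> [NU Nge0]; exists (invmx N *m const_mx 1); split => i; last first.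
  by rewrite mulmxA mulmxV // mul1mx mxE ltr01.
have row_ge0 j : 0 <= invmx N i j * (const_mx 1 : 'cV[R]_n) j 0.
  by rewrite mxE mulr1.
rewrite mxE lt_neqAle sumr_ge0 // andbT; apply/negP => /eqP row0.
have invN_row0 j : invmx N i j = 0.
  have := @psumr_eq0P _ _ xpredT _ (fun j _ => row_ge0 j) (esym row0) j erefl.
  by rewrite mxE mulr1.
have : (invmx N *m N) i i = 1 by rewrite mulVmx // mxE eqxx.
by rewrite mxE big1 => [/esym/eqP|j _]; rewrite ?oner_eq0 // invN_row0 mul0r.
Qed.

Lemma Zmatrix_add_scalar W t : Zmatrix W -> Zmatrix (W + t%:M).
Proof. by move=> ZW i j ij; rewrite !mxE (negPf ij) mulr0n addr0; apply: ZW. Qed.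

End MonotoneMatrices.

Section PerturbationLimit.
Variables (R : realType) (n : nat).
Implicit Types (F N : 'M[R]_n) (x y z : 'cV[R]_n).

Definition norm1 z : R := \sum_j `|z j 0|.

Definition mxnorm1 F : R := \sum_l \sum_j `|F l j|.

Lemma norm1_ge0 z : 0 <= norm1 z.
Proof. by apply: sumr_ge0 => j _. Qed.

Lemma mxnorm1_ge0 F : 0 <= mxnorm1 F.
Proof. by apply: sumr_ge0 => l _; apply: sumr_ge0. Qed.

Lemma ler_norm1 z j : `|z j 0| <= norm1 z.
Proof. by rewrite /norm1 (bigD1 j) //= lerDl; apply: sumr_ge0. Qed.

Lemma norm1_mulmx_le F z : norm1 (F *m z) <= mxnorm1 F * norm1 z.
Proof.
rewrite /mxnorm1 mulr_suml; apply: ler_sum => l _.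
rewrite mxE mulr_suml; apply: le_trans (ler_norm_sum _ _ _) _.
by apply: ler_sum => j _; rewrite normrM ler_wpM2l // ler_norm1.
Qed.

(* [z = x - e F z] with [F = N^-1]: for [e] small the norm of [z] stays
   bounded by twice that of [x], so [x_i >= - e (F z)_i] cannot stay
   below a fixed negative number. *)
Lemma invmx_mul_ge0_of_perturbed N y :
  N \in unitmx ->
  (forall e, 0 < e -> exists z, (forall i, 0 <= z i 0) /\ (N + e%:M) *m z = y) ->
  forall i, 0 <= (invmx N *m y) i 0.
Proof.
move=> NU perturbed i; set F := invmx N; set x := F *m y.
rewrite leNgt; apply/negP => xi_lt0.
set k := mxnorm1 F; set a := norm1 x; set p := - x i 0.
have k_ge0 : 0 <= k := mxnorm1_ge0 F.
have p_gt0 : 0 < p by rewrite oppr_gt0.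
have p_le_a : p <= a by apply: le_trans (ler_norm1 x i); rewrite /p -normrN ler_norm.
pose e := p / (4 * (k + 1) * (a + 1)).
have e_gt0 : 0 < e by rewrite divr_gt0 // !mulr_gt0 //; lra.
have [z [z_ge0 Nz]] := perturbed e e_gt0.
have z_eq : z = x - e *: (F *m z).
  suff -> : x = z + e *: (F *m z) by rewrite addrK.
  by rewrite /x -Nz mulmxA mulmxDr mulVmx // mul_mx_scalar mulmxDl mul1mx
             -scalemxAl.
have Fz_le : norm1 (F *m z) <= k * norm1 z := norm1_mulmx_le F z.
have q_le : norm1 z <= a + e * (k * norm1 z).
  apply: le_trans (_ : a + e * norm1 (F *m z) <= _); last first.
    by rewrite lerD2l ler_wpM2l // ltW.
  rewrite /a /norm1 mulr_sumr -big_split /=; apply: ler_sum => j _.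
  rewrite {1}z_eq !mxE (le_trans (ler_normB _ _)) //.
  by rewrite normrM (gtr0_norm e_gt0).
have p_le : p <= e * (k * norm1 z).
  have Fzi_le : - (F *m z) i 0 <= k * norm1 z.
    apply: le_trans Fz_le; apply: le_trans (ler_norm1 _ i).
    by rewrite -normrN ler_norm.
  have zi : z i 0 = x i 0 - e * (F *m z) i 0 by rewrite {1}z_eq !mxE.
  have := z_ge0 i; rewrite zi /p.
  have : e * - (F *m z) i 0 <= e * (k * norm1 z) by rewrite ler_wpM2l // ltW.
  lra.
have ek_le : 4 * (e * k) * (a + 1) <= p.
  have -> : 4 * (e * k) * (a + 1) = p * (k / (k + 1)).
    by rewrite /e; field; apply/andP; split; apply/negP => /eqP; lra.
  by rewrite ger_pMr // ler_pdivrMr; lra.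
have c_ge0 : 0 <= e * k by rewrite mulr_ge0 // ltW.
have q_ge0 := norm1_ge0 z.
rewrite mulrA in q_le p_le.
set c := e * k in c_ge0 q_le p_le ek_le; set q := norm1 z in q_ge0 q_le p_le.
nra.
Qed.

End PerturbationLimit.

Lemma gt_spectral_radius_det_shift (R : realType) (n : nat) (s : R) (B : 'M[R]_n) :
  gt_spectral_radius s B -> forall t, 0 <= t -> \det (s%:M - B + t%:M) != 0.
Proof.
move=> rhoB t t_ge0; apply/negP => /det0P [v vn0 vM].
have : eigenvalue B (s + t).
  apply/eigenvalueP; exists v => //; apply/eqP; rewrite eq_sym -subr_eq0.
  by rewrite -mul_mx_scalar -mulmxBr -vM addrAC -raddfD.
rewrite eigenvalue_root_char => /(rmorph_root (real_complex R)).
rewrite map_char_poly => /rhoB.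
rewrite /Normc.normc /= expr0n /= addr0 sqrtr_sqr.
have := ler_norm (s + t); lra.
Qed.

Section ShiftSemipositive.
Variables (R : realType) (n : nat) (M : 'M[R]_n).
Hypothesis ZM : Zmatrix M.

Lemma mulmx_shift_entry t (u : 'cV[R]_n) i :
  ((M + t%:M) *m u) i 0 = (M *m u) i 0 + t * u i 0.
Proof. by rewrite mulmxDl mul_scalar_mx !mxE. Qed.

Lemma semipositive_shift_le t t' :
  semipositive (M + t%:M) -> t <= t' -> semipositive (M + t'%:M).
Proof.
move=> [u [u_gt0 Mu_gt0]] tt'; exists u; split => // i.
have := Mu_gt0 i; rewrite !mulmx_shift_entry.
have : t * u i 0 <= t' * u i 0 by rewrite ler_wpM2r // ltW.
lra.
Qed.

Lemma semipositive_shift_large :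
  semipositive (M + (1 + \sum_i \sum_j `|M i j|)%:M).
Proof.
exists (const_mx 1); split => i; first by rewrite mxE ltr01.
rewrite mulmx_shift_entry !mxE mulr1.
have row_le : - \sum_j M i j * (const_mx 1 : 'cV[R]_n) j 0 <= \sum_j `|M i j|.
  by rewrite -sumrN; apply: ler_sum => j _; rewrite mxE mulr1 -normrN ler_norm.
have : \sum_j `|M i j| <= \sum_i \sum_j `|M i j|.
  by rewrite [X in _ <= X](bigD1 i) //= lerDl; apply: sumr_ge0 => l _;
     apply: sumr_ge0.
lra.
Qed.

Lemma semipositive_shift_open t : semipositive (M + t%:M) ->
  exists2 d, 0 < d & semipositive (M + (t - d)%:M).
Proof.
move=> [u [u_gt0 Mu_gt0]].
pose w i := ((M + t%:M) *m u) i 0.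
pose sig := \sum_i u i 0 / w i.
have ratio_ge0 i : 0 <= u i 0 / w i.
  exact: divr_ge0 (ltW (u_gt0 i)) (ltW (Mu_gt0 i)).
have ratio_le i : u i 0 / w i <= sig.
  by rewrite /sig (bigD1 i) //= lerDl; apply: sumr_ge0 => j _.
have sig_ge0 : 0 <= sig by apply: sumr_ge0 => j _.
exists (1 / (1 + sig)); first by rewrite divr_gt0 //; lra.
exists u; split => // i; rewrite mulmx_shift_entry.
have wi_gt0 : 0 < w i := Mu_gt0 i.
have := ratio_le i; rewrite ler_pdivrMr // => ui_le.
have : 1 / (1 + sig) * u i 0 < w i.
  by rewrite mul1r ltr_pdivrMl; [have := u_gt0 i; nra | lra].
rewrite /w mulmx_shift_entry; lra.
Qed.

Lemma monotone_shift_of_above ts :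
  M + ts%:M \in unitmx ->
  (forall t, ts < t -> semipositive (M + t%:M)) -> monotone_mx (M + ts%:M).
Proof.
move=> NU above; split=> // i j.
have := @invmx_mul_ge0_of_perturbed R n _ (delta_mx j 0) NU _ i.
rewrite -colE mxE; apply=> e e_gt0.
have [WU Wge0] := semipositive_Zmatrix_monotone (Zmatrix_add_scalar (ts + e) ZM)
                    (above (ts + e) ltac:(lra)).
exists (invmx (M + (ts + e)%:M) *m delta_mx j 0); split.
  by move=> l; rewrite -colE mxE.
by rewrite -addrA -raddfD /= mulmxA mulmxV // mul1mx.
Qed.

(* Continuation in [t]: the semipositive shifts [M + t I] form an open
   up-set of reals containing large [t].  If it missed [0], then at its
   infimum [ts >= 0] the matrix [M + ts I] would be invertible, hence
   monotone as a limit of monotone matrices, hence semipositive,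
   contradicting openness. *)
Lemma semipositive_of_det_shift :
  (forall t, 0 <= t -> \det (M + t%:M) != 0) -> semipositive M.
Proof.
move=> det_shift.
have [S0|notS0] := pselect (semipositive (M + 0%:M)).
  by rewrite raddf0 addr0 in S0.
pose S t := semipositive (M + t%:M).
have S_gt0 t : S t -> 0 < t.
  move=> St; rewrite ltNge; apply/negP => t_le0.
  exact/notS0/(semipositive_shift_le St).
have S_lb : classical_sets.has_lbound S by exists 0 => t /S_gt0 /ltW.
have S_inf : classical_sets.has_inf S.
  by split=> //; exists (1 + \sum_i \sum_j `|M i j|);
     apply: semipositive_shift_large.
set ts := inf S.
have ts_ge0 : 0 <= ts by apply: lb_le_inf S_inf.1 _ => t /S_gt0 /ltW.
have notSts : ~ S ts.
  move=> /semipositive_shift_open [d d_gt0 Sd].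
  by have := ge_inf S_lb Sd; rewrite -/ts; lra.
have above t : ts < t -> S t.
  rewrite -subr_gt0 => ts_lt; have [e Se et] := inf_adherent ts_lt S_inf.
  by apply: semipositive_shift_le Se _; rewrite -/ts in et; lra.
exfalso; apply/notSts/monotone_mx_semipositive/monotone_shift_of_above => //.
by rewrite unitmxE unitfE det_shift.
Qed.

End ShiftSemipositive.

Lemma nonsingular_Mmatrix_semipositive (R : realType) (n : nat) (M : 'M[R]_n) :
  nonsingular_Mmatrix M -> semipositive M.
Proof.
case=> ZM [s [B [_ [EM rhoB]]]]; apply: (semipositive_of_det_shift ZM).
rewrite EM; exact: gt_spectral_radius_det_shift.
Qed.

Section GeneralizedNewton.
Variables (R : realType) (n : nat) (A : 'M[R]_n) (b : 'cV[R]_n).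
Implicit Types (x y : 'cV[R]_n).

Lemma Dsign_mulmx_entry x y i : (Dsign x *m y) i 0 = Num.sg (x i 0) * y i 0.
Proof. by rewrite /Dsign mul_diag_mx !mxE. Qed.

Lemma Dsign_mulmx_self x : Dsign x *m x = absv x.
Proof.
by apply/matrixP => i j; rewrite (ord1 j) Dsign_mulmx_entry mxE -normrEsg.
Qed.

Lemma Dsign_le1 x i : (\row_j Num.sg (x j 0)) 0 i <= 1.
Proof. by rewrite mxE (le_trans (ler_norm _)) // normr_sg lern1 leq_b1. Qed.

Lemma AVE_of_gnewton_fixpoint x :
  A - Dsign x \in unitmx -> invmx (A - Dsign x) *m b = x -> is_AVE_solution A b x.
Proof.
move=> U fix_x; rewrite /is_AVE_solution -Dsign_mulmx_self -mulmxBl.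
by rewrite -{2}fix_x mulmxA mulmxV // mul1mx.
Qed.

Section Stabilization.
Variables (x0 : 'cV[R]_n) (S : 'cV[R]_n -> Prop) (m : nat).
Hypothesis S_monotone : forall x, S x -> monotone_mx (A - Dsign x).
Hypothesis S_step : forall x, S x -> S (invmx (A - Dsign x) *m b).
Hypothesis S_card_pos : forall x, S x -> (#|[set j | (0 < x j 0)%R]| <= m)%N.
Hypothesis S_x0 : S x0.

Local Notation gn := (gnewton A b x0).
Local Notation pos k := [set j | 0 < gn k j 0].

Lemma gnewton_in k : S (gn k).
Proof. by elim: k => //= k; apply: S_step. Qed.

Lemma gnewton_eq k : (A - Dsign (gn k)) *m gn k.+1 = b.
Proof.
by have [U _] := S_monotone (gnewton_in k); rewrite /= mulmxA mulmxV // mul1mx.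
Qed.

Lemma gnewton_step_entry k i :
  ((A - Dsign (gn k.+1)) *m (gn k.+2 - gn k.+1)) i 0 =
  Num.sg (gn k.+1 i 0) * gn k.+1 i 0 - Num.sg (gn k i 0) * gn k.+1 i 0.
Proof.
have entryB (P Q : 'cV[R]_n) : (P - Q) i 0 = P i 0 - Q i 0 by rewrite !mxE.
rewrite mulmxBr gnewton_eq -[X in X - _](gnewton_eq k) !mulmxBl !entryB.
by rewrite !Dsign_mulmx_entry; ring.
Qed.

(* [A - D(x^(k+1))] is monotone and maps [x^(k+2) - x^(k+1)] to
   [|x^(k+1)| - D(x^k) x^(k+1) >= 0]. *)
Lemma gnewton_le k i : gn k.+1 i 0 <= gn k.+2 i 0.
Proof.
rewrite -subr_ge0.
have -> : gn k.+2 i 0 - gn k.+1 i 0 = (gn k.+2 - gn k.+1) i 0 by rewrite !mxE.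
apply: (monotone_mx_ge0 (S_monotone (gnewton_in k.+1))) => l.
rewrite gnewton_step_entry -normrEsg subr_ge0 (le_trans (ler_norm _)) //.
by rewrite normrM ler_piMl // normr_sg; case: (_ != 0).
Qed.

Lemma gnewton_stop k :
  pos k.+2 \subset pos k.+1 -> gn k.+3 = gn k.+2.
Proof.
move=> /subsetP pos_sub.
have [U _] := S_monotone (gnewton_in k.+2).
suff step0 : (A - Dsign (gn k.+2)) *m (gn k.+3 - gn k.+2) = 0.
  by apply/eqP; rewrite -subr_eq0 -(mulKmx U (_ - _)) step0 mulmx0.
apply/matrixP => i j; rewrite (ord1 j) gnewton_step_entry [RHS]mxE.
case: (ltrgt0P (gn k.+2 i 0)) => [xi_gt0|xi_lt0|->].
- have := pos_sub i; rewrite !inE => /(_ xi_gt0) xi1_gt0.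
  by rewrite !gtr0_sg ?subrr.
- rewrite !ltr0_sg ?subrr //.
  exact: le_lt_trans (gnewton_le k i) xi_lt0.
by rewrite !mulr0 subrr.
Qed.

Lemma gnewton_succ k : gn k.+1 = invmx (A - Dsign (gn k)) *m b.
Proof. by []. Qed.

Lemma gnewton_const_from j : gn j.+1 = gn j -> forall l, gn (j + l) = gn j.
Proof.
move=> fix_j; elim=> [|l IH]; first by rewrite addn0.
by rewrite addnS gnewton_succ IH -gnewton_succ.
Qed.

(* Each step that does not stop the iteration adds a positive entry. *)
Lemma gnewton_card_pos_grow j : gn j.+3 != gn j.+2 -> (j < #|pos j.+2|)%N.
Proof.
have grow k : gn k.+3 != gn k.+2 -> (#|pos k.+1| < #|pos k.+2|)%N.
  move=> moving; apply: proper_card; rewrite properE; apply/andP; split.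
    by apply/subsetP => i; rewrite !inE => /lt_le_trans; apply; apply: gnewton_le.
  by apply: contra moving => /gnewton_stop ->; rewrite eqxx.
elim: j => [/grow|j IH moving]; first by lia.
have /IH : gn j.+3 != gn j.+2.
  apply: contra moving => /eqP fix_j; have := gnewton_const_from fix_j 2.
  by rewrite addn2 => ->; rewrite fix_j eqxx.
by have := grow _ moving; lia.
Qed.

Lemma gnewton_stationary k : (m.+2 <= k)%N -> gn k = gn m.+2.
Proof.
have fix_m : gn m.+3 = gn m.+2.
  apply/eqP; apply: contraT => /gnewton_card_pos_grow.
  by have := S_card_pos (gnewton_in m.+2); lia.
move=> le_k; rewrite -(subnKC le_k); exact: gnewton_const_from.
Qed.

Lemma gnewton_solves :
  gnewton_well_defined A b x0 /\ is_AVE_solution A b (gn m.+2) /\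
  forall k, (m.+2 <= k)%N -> gn k = gn m.+2.
Proof.
split=> [k|]; first exact: (S_monotone (gnewton_in k)).1.
split; last exact: gnewton_stationary.
apply: AVE_of_gnewton_fixpoint; first exact: (S_monotone (gnewton_in _)).1.
exact: (gnewton_stationary (leqnSn _)).
Qed.

End Stabilization.
End GeneralizedNewton.

Lemma reducible_of_block (R : realType) (n : nat) (M : 'M[R]_n) (J : {set 'I_n}) :
  J != set0 -> J != setT ->
  (forall i j, i \in J -> j \notin J -> M j i = 0) -> reducible M.
Proof.
move=> J0 JT MJ.
have [cJ_gt0 cJ_lt] : (0 < #|J| /\ #|J| < n)%N.
  have := cardsC J; have : (0 < #|~: J|)%N.
    by rewrite card_gt0; apply: contra JT => /eqP CJ0; rewrite -[J]setCK CJ0 setC0.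
  by rewrite card_ord; have := J0; rewrite -card_gt0; lia.
pose t := enum J ++ enum (~: J).
have size_t : size t = n by rewrite size_cat -!cardE cardsC card_ord.
have uniq_t : uniq t.
  rewrite cat_uniq !enum_uniq andbT /=; apply/hasPn => x.
  by rewrite !mem_enum inE.
pose f (p : 'I_n) := nth p t p.
have fE p q : f p = nth q t p by apply: set_nth_default; rewrite size_t.
have f_inj : injective f.
  move=> p q; rewrite (fE p q) /f => /eqP; rewrite nth_uniq ?size_t //.
  by move=> /eqP; apply: val_inj.
exists (perm f_inj)^-1%g, #|J|; split; first by rewrite cJ_gt0.
move=> i j ki jk; rewrite tr_perm_mx invgK -row_permE -col_permE !mxE !permE.
apply: MJ; rewrite /f nth_cat -cardE.
  by rewrite jk -mem_enum mem_nth // -cardE.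
rewrite ltnNge ki /=.
have : nth i (enum (~: J)) (i - #|J|) \in enum (~: J).
  apply: mem_nth; rewrite -cardE.
  by have := cardsC J; rewrite card_ord ltn_subLR // => ->.
by rewrite mem_enum inE.
Qed.

Lemma mulmx_subdiag_entry (R : realType) (n : nat) (A : 'M[R]_n) (d : 'rV[R]_n)
    (u : 'cV[R]_n) i :
  ((A - diag_mx d) *m u) i 0 = ((A - 1%:M) *m u) i 0 + (1 - d 0 i) * u i 0.
Proof.
have entryB (P Q : 'cV[R]_n) : (P - Q) i 0 = P i 0 - Q i 0 by rewrite !mxE.
by rewrite !mulmxBl mul_diag_mx mul1mx !entryB [(\matrix_(i, j) _) i 0]mxE; ring.
Qed.

Section ShiftedByDiagonal.
Variables (R : realType) (n : nat) (A : 'M[R]_n).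
Implicit Types (d : 'rV[R]_n) (u q v b : 'cV[R]_n).

Lemma subdiag_offdiag d i j : i != j -> (A - diag_mx d) i j = (A - 1%:M) i j.
Proof. by move=> ij; rewrite !mxE (negPf ij) !mulr0n. Qed.

Lemma Zmatrix_subdiag d : Zmatrix (A - 1%:M) -> Zmatrix (A - diag_mx d).
Proof. by move=> ZA i j ij; rewrite subdiag_offdiag // ZA. Qed.

Lemma monotone_subdiag_semipositive d :
  Zmatrix (A - 1%:M) -> semipositive (A - 1%:M) -> (forall i, d 0 i <= 1) ->
  monotone_mx (A - diag_mx d).
Proof.
move=> ZA [u [u_gt0 Au_gt0]] d_le1.
apply: semipositive_Zmatrix_monotone; first exact: Zmatrix_subdiag.
exists u; split => // i; rewrite mulmx_subdiag_entry.
by have := Au_gt0 i; have := d_le1 i; have := u_gt0 i; nra.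
Qed.

Lemma trmx_subdiag d : (A - diag_mx d)^T = A^T - diag_mx d.
Proof. by rewrite linearB /= tr_diag_mx. Qed.

(* [v] is a positive left null vector of [A - I]; a block of the transpose
   that [v] does not see would make [A - I] reducible, unless it is
   everything, which [d_i < 1] forbids. *)
Lemma monotone_subdiag_irreducible v d :
  Zmatrix (A - 1%:M) -> irreducible (A - 1%:M) ->
  (forall i, 0 < v i 0) -> (A^T - 1%:M) *m v = 0 ->
  (forall i, d 0 i <= 1) -> (exists i, d 0 i < 1) ->
  monotone_mx (A - diag_mx d).
Proof.
move=> ZA irrA v_gt0 Av0 d_le1 [i0 di0_lt1].
pose W := (A - diag_mx d)^T.
have Wv i : (W *m v) i 0 = (1 - d 0 i) * v i 0.
  rewrite /W trmx_subdiag.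
  by rewrite (mulmx_subdiag_entry A^T) Av0 mxE add0r.
suff [WU Wge0] : monotone_mx W.
  split; first by rewrite -unitmx_tr.
  by move=> i j; have := Wge0 j i; rewrite /W -trmx_inv mxE.
apply/monotone_mx_of_reflect_ge0/(Zmatrix_sol_ge0 (u := v)) => //.
- move=> i j ij; rewrite /W mxE subdiag_offdiag 1?eq_sym //.
  by apply: ZA; rewrite eq_sym.
- by move=> i; rewrite Wv mulr_ge0 ?subr_ge0 // ltW.
move=> J J0 Jblock.
have [JT|JT] := eqVneq J setT.
  have [] := Jblock i0; rewrite ?JT ?inE // Wv => /eqP.
  by rewrite mulf_eq0 subr_eq0 (gt_eqF di0_lt1) (gt_eqF (v_gt0 i0)).
apply/irrA/(reducible_of_block J0 JT) => i j iJ jJ.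
have [_ /(_ j jJ)] := Jblock i iJ; rewrite /W mxE subdiag_offdiag //.
by apply: contraNneq jJ => ->.
Qed.

Lemma subdiag_nonneg_solution_contra v b d q :
  (A^T - 1%:M) *m v = 0 -> (forall i, 0 < v i 0) -> (v^T *m b) 0 0 < 0 ->
  (forall i, d 0 i <= 1) -> (forall i, 0 <= q i 0) -> (A - diag_mx d) *m q != b.
Proof.
move=> Av0 v_gt0 vb_lt0 d_le1 q_ge0; apply/eqP => Aq.
suff : 0 <= (v^T *m b) 0 0 by rewrite leNgt vb_lt0.
rewrite -Aq mulmxA -[A - _]trmxK trmx_subdiag -trmx_mul mxE.
apply: sumr_ge0 => i _; rewrite mxE mulmx_subdiag_entry Av0 mxE add0r.
by rewrite mulr_ge0 // mulr_ge0 ?subr_ge0 // ltW.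
Qed.

End ShiftedByDiagonal.

Section Uniqueness.
Variables (R : realType) (n : nat) (A : 'M[R]_n) (b : 'cV[R]_n).
Implicit Types (x y z : 'cV[R]_n).

(* Difference quotients of [|.|]: [|y| - |z| = diag (abs_slope y z) (y - z)]. *)
Definition abs_slope y z : 'rV[R]_n :=
  \row_i (if y i 0 == z i 0 then 0
          else (`|y i 0| - `|z i 0|) / (y i 0 - z i 0)).

Lemma abs_slope_le1 y z i : abs_slope y z 0 i <= 1.
Proof.
rewrite mxE; case: eqP => [_|/eqP yz]; first exact: ler01.
have := lerB_dist (y i 0) (z i 0); have := lerB_dist (z i 0) (y i 0).
rewrite distrC; case: (ltrgt0P (y i 0 - z i 0)) => [yz_gt0|yz_lt0|].
- by rewrite ler_pdivrMr // mul1r; lra.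
- by rewrite ler_ndivrMr // mul1r; lra.
- by move/eqP; rewrite subr_eq0 (negPf yz).
Qed.

Lemma abs_slope_lt1 y z i : y i 0 < 0 -> abs_slope y z 0 i < 1.
Proof.
move=> yi_lt0; rewrite mxE; case: eqP => [_|/eqP yz]; first exact: ltr01.
rewrite (ltr0_norm yi_lt0); case: (ltrgt0P (y i 0 - z i 0)) => [yz_gt0|yz_lt0|].
- rewrite ltr_pdivrMr // mul1r ltr0_norm; lra.
- rewrite ltr_ndivrMr // mul1r; case: (lerP 0 (z i 0)) => [zi_ge0|zi_lt0].
    by rewrite ger0_norm //; lra.
  by rewrite ltr0_norm //; lra.
- by move/eqP; rewrite subr_eq0 (negPf yz).
Qed.

Lemma mulmx_diag_abs_slope y z : diag_mx (abs_slope y z) *m (y - z) = absv y - absv z.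
Proof.
apply/matrixP => i j; rewrite (ord1 j) mul_diag_mx !mxE.
case: eqP => [->|/eqP yz]; first by rewrite !subrr mul0r.
by rewrite divfK // subr_eq0.
Qed.

Lemma AVE_solution_unique y z :
  is_AVE_solution A b y -> is_AVE_solution A b z ->
  A - diag_mx (abs_slope y z) \in unitmx -> y = z.
Proof.
move=> sol_y sol_z U.
have : (A - diag_mx (abs_slope y z)) *m (y - z) = 0.
  rewrite mulmxBl mulmx_diag_abs_slope mulmxBr.
  rewrite -[A *m y](subrK (absv y)) -[A *m z](subrK (absv z)) sol_y sol_z.
  by rewrite opprD addrACA subrr add0r subrr.
by move/(congr1 (mulmx (invmx (A - diag_mx (abs_slope y z)))));
   rewrite mulKmx // mulmx0 => /eqP; rewrite subr_eq0 => /eqP.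
Qed.



End Uniqueness.

Lemma AVE_solution_has_neg (R : realType) (n : nat) (A : 'M[R]_n) (b v y : 'cV[R]_n) :
  (A^T - 1%:M) *m v = 0 -> (forall i, 0 < v i 0) -> (v^T *m b) 0 0 < 0 ->
  is_AVE_solution A b y -> exists i, y i 0 < 0.
Proof.
move=> Av0 v_gt0 vb_lt0 sol_y.
case: (boolP [exists i, y i 0 < 0]) => [/existsP //|/existsPn y_ge0].
have y_ge0' i : 0 <= y i 0 by rewrite leNgt y_ge0.
have one_le1 i : (const_mx 1 : 'rV[R]_n) 0 i <= 1 by rewrite mxE.
have /negP[] := subdiag_nonneg_solution_contra Av0 v_gt0 vb_lt0 one_le1 y_ge0'.
apply/eqP; rewrite diag_const_mx mulmxBl mul1mx -sol_y; congr (_ - _).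
by apply/matrixP => i j; rewrite (ord1 j) mxE ger0_norm.
Qed.

Lemma gnewton_nonsingular_Mmatrix (R : realType) (n : nat) (A : 'M[R]_n)
    (b : 'cV[R]_n) :
  nonsingular_Mmatrix (A - 1%:M) ->
  forall x0 : 'cV[R]_n,
    gnewton_well_defined A b x0 /\
    exists xs : 'cV[R]_n,
      (is_AVE_solution A b xs /\ forall y, is_AVE_solution A b y -> y = xs) /\
      forall k, (n.+2 <= k)%N -> gnewton A b x0 k = xs.
Proof.
move=> MA x0; have ZA : Zmatrix (A - 1%:M) by case: MA.
have monoA (d : 'rV[R]_n) : (forall i, d 0 i <= 1) -> monotone_mx (A - diag_mx d).
  exact: monotone_subdiag_semipositive ZA (nonsingular_Mmatrix_semipositive MA).
have card_le (x : 'cV[R]_n) : True -> (#|[set j | (0 < x j 0)%R]| <= n)%N.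
  by move=> _; rewrite -[X in (_ <= X)%N]card_ord; apply: max_card.
have [wd [sol stat]] := @gnewton_solves R n A b x0 (fun=> True) n
  (fun x _ => monoA _ (Dsign_le1 x)) (fun _ _ => I) card_le I.
split; first exact: wd.
exists (gnewton A b x0 n.+2); split; last exact: stat.
split; first exact: sol.
move=> y sol_y; exact: AVE_solution_unique sol_y sol (monoA _ (abs_slope_le1 _ _)).1.
Qed.

Lemma gnewton_irreducible_singular_Mmatrix (R : realType) (n : nat)
    (A : 'M[R]_n) (b v : 'cV[R]_n) :
  singular_Mmatrix (A - 1%:M) -> irreducible (A - 1%:M) ->
  (forall i, 0 < v i 0) -> (A^T - 1%:M) *m v = 0 -> (v^T *m b) 0 0 < 0 ->
  forall x0 : 'cV[R]_n, Dsign x0 != 1%:M ->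
    gnewton_well_defined A b x0 /\
    exists xs : 'cV[R]_n,
      (is_AVE_solution A b xs /\ forall y, is_AVE_solution A b y -> y = xs) /\
      forall k, (n.+1 <= k)%N -> gnewton A b x0 k = xs.
Proof.
move=> [ZA _] irrA v_gt0 Av0 vb_lt0 x0 Dx0.
have monoA (d : 'rV[R]_n) : (forall i, d 0 i <= 1) -> (exists i, d 0 i < 1) ->
    monotone_mx (A - diag_mx d).
  exact: monotone_subdiag_irreducible ZA irrA v_gt0 Av0.
pose S (x : 'cV[R]_n) := exists i, x i 0 <= 0.
have S_mono x : S x -> monotone_mx (A - Dsign x).
  case=> i xi_le0; apply: monoA (Dsign_le1 x) _; exists i.
  by rewrite mxE (le_lt_trans _ ltr01) // sgr_le0.
have S_step x : S x -> S (invmx (A - Dsign x) *m b).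
  move=> Sx; have [U _] := S_mono x Sx; set q := invmx _ *m b.
  case: (boolP [exists i, q i 0 <= 0]) => [/existsP //|/existsPn q_gt0].
  have q_ge0 i : 0 <= q i 0 by rewrite ltW // ltNge q_gt0.
  have /negP[] := subdiag_nonneg_solution_contra Av0 v_gt0 vb_lt0 (Dsign_le1 x) q_ge0.
  by rewrite /q mulmxA mulmxV // mul1mx.
have S_card x : S x -> (#|[set j | (0 < x j 0)%R]| <= n.-1)%N.
  case=> i xi_le0; have : [set j | (0 < x j 0)%R] \proper [set: 'I_n].
    by rewrite properT; apply/eqP => /setP/(_ i); rewrite !inE ltNge xi_le0.
  by move/proper_card; rewrite cardsT card_ord; lia.
have S_x0 : S x0.
  case: (boolP [exists i, x0 i 0 <= 0]) => [/existsP //|/existsPn x0_gt0].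
  case/eqP: Dx0; apply/matrixP => i j; rewrite /Dsign !mxE gtr0_sg //.
  by rewrite ltNge x0_gt0.
have n_gt0 : (0 < n)%N by case: S_x0 => i _; apply: leq_ltn_trans (ltn_ord i).
have [wd [sol stat]] := gnewton_solves S_mono S_step S_card S_x0.
rewrite prednK // in sol stat.
split; first exact: wd.
exists (gnewton A b x0 n.+1); split; last exact: stat.
split; first exact: sol.
move=> y sol_y; have [i yi_lt0] := AVE_solution_has_neg Av0 v_gt0 vb_lt0 sol_y.
apply: AVE_solution_unique sol_y sol (monoA _ (abs_slope_le1 _ _) _).1.
by exists i; apply: abs_slope_lt1.
Qed.

Theorem theorem4p2 (R : realType) (n : nat) (A : 'M[R]_n) (b : 'cV[R]_n) :
  (* (a) *)
  (nonsingular_Mmatrix (A - 1%:M) ->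
   forall x0 : 'cV[R]_n,
     gnewton_well_defined A b x0 /\
     exists xs : 'cV[R]_n,
       (is_AVE_solution A b xs /\
        forall y, is_AVE_solution A b y -> y = xs) /\
       forall k, (n.+2 <= k)%N -> gnewton A b x0 k = xs)
  /\
  (* (b) *)
  (forall v : 'cV[R]_n,
     singular_Mmatrix (A - 1%:M) -> irreducible (A - 1%:M) ->
     (forall i, 0 < v i 0) -> (A^T - 1%:M) *m v = 0 ->
     (v^T *m b) 0 0 < 0 ->
   forall x0 : 'cV[R]_n, Dsign x0 != 1%:M ->
     gnewton_well_defined A b x0 /\
     exists xs : 'cV[R]_n,
       (is_AVE_solution A b xs /\
        forall y, is_AVE_solution A b y -> y = xs) /\
       forall k, (n.+1 <= k)%N -> gnewton A b x0 k = xs).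
Proof.
split; [exact: gnewton_nonsingular_Mmatrix | exact: gnewton_irreducible_singular_Mmatrix].
Qed.
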